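(* Let $\alpha$ be a countably infinite order type and $S$ a sierpinskisation of $\alpha$ and $\omega$. Assume $\alpha=\omega\alpha'+n$ where $n<\omega$. Then there is a subset of $S$ which (with the induced order) is the direct sum $S'\oplus F$ of a sierpinskisation $S'$ of $\omega\alpha'$ and $\omega$ with an $n$-element poset $F$.
   Context: A sierpinskisation of a countable order type $\beta$ and $\omega$ is a poset whose order is the intersection of two linear orders on its underlying set, one of type $\beta$ and one of type $\omega$. $\omega\alpha'$ denotes the ordered sum of $\alpha'$ copies of the chain $\omega$, and $\omega\alpha'+n$ is followed by an $n$-element chain. The direct sum $A\oplus B$ of posets is their disjoint union in which elements of $A$ are incomparable to elements of $B$. *)

From mathcomp Require Import all_boot.
Set Implicit Arguments. Unset Strict Implicit. Unset Printing Implicit Defensive.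

Definition linear_order (T : Type) (R : T -> T -> Prop) : Prop :=
  [/\ (forall x, R x x),
      (forall x y, R x y -> R y x -> x = y),
      (forall x y z, R x y -> R y z -> R x z)
    & (forall x y, R x y \/ R y x)].

Definition order_iso (T U : Type) (R : T -> T -> Prop) (Q : U -> U -> Prop) : Prop :=
  exists f : T -> U, bijective f /\ forall x y, R x y <-> Q (f x) (f y).

Definition omega_le (m n : nat) : Prop := (m <= n)%N.

(* The order type omega * alpha' : alpha' copies of omega (lexicographic on B * nat,
   the B-coordinate being the more significant one). *)
Definition omega_times (B : Type) (RB : B -> B -> Prop) (x y : B * nat) : Prop :=
  (RB x.1 y.1 /\ x.1 <> y.1) \/ (x.1 = y.1 /\ (x.2 <= y.2)%N).

Definition omega_times_plus (B : Type) (RB : B -> B -> Prop) (n : nat)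
  (x y : (B * nat) + 'I_n) : Prop :=
  match x, y with
  | inl a, inl b => omega_times RB a b
  | inl _, inr _ => True
  | inr _, inl _ => False
  | inr i, inr j => (i <= j)%N
  end.

Definition sierpinskisation (X : Type) (P : X -> X -> Prop)
  (Bt : Type) (RB : Bt -> Bt -> Prop) : Prop :=
  exists L1 L2 : X -> X -> Prop,
    [/\ linear_order L1, linear_order L2,
        order_iso L1 RB, order_iso L2 omega_le
      & forall x y, P x y <-> L1 x y /\ L2 x y].

Definition induced (X : Type) (Y : X -> Prop) (P : X -> X -> Prop)
  (x y : {x : X | Y x}) : Prop := P (proj1_sig x) (proj1_sig y).
Arguments omega_times_plus {B} RB n x y.
Arguments induced {X} Y P x y.

From mathcomp Require Import all_boot.
From mathcomp Require Import zify.
From Stdlib Require Import ProofIrrelevance.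

Set Implicit Arguments. Unset Strict Implicit. Unset Printing Implicit Defensive.

(* Let S be the intersection of L1, of type omega*alpha'+n, and L2, of type
   omega.  The n elements at the top of L1 have L2-positions below some M; take
   for S' the elements of L2-position at least M.  Each element of S' is
   L1-below and L2-above each of the n top elements, so the two parts are
   incomparable.  Removing finitely many points from omega, or from each copy
   of omega in omega*alpha', leaves infinite subsets of nat, and re-enumerating
   them by rank shows that the order types are unchanged. *)

Definition unbounded (S : pred nat) := forall N, exists2 k, N <= k & S k.

Definition rank (S : pred nat) k := count S (iota 0 k).

Section Rank.

Variable S : pred nat.

Lemma rankS k : rank S k.+1 = rank S k + S k.
Proof. by rewrite /rank -addn1 iotaD count_cat /= add0n addn0. Qed.

Lemma rank_leq k k' : k <= k' -> rank S k <= rank S k'.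
Proof.
move=> le_kk'; rewrite -(subnKC le_kk') /rank iotaD count_cat add0n.
exact: leq_addr.
Qed.

Lemma rank_lt k k' : S k -> k < k' -> rank S k < rank S k'.
Proof. by move=> Sk lt_kk'; apply: leq_trans _ (rank_leq lt_kk'); rewrite rankS Sk addn1. Qed.

Lemma leq_rank k k' : S k -> S k' -> (rank S k <= rank S k') = (k <= k').
Proof.
move=> Sk Sk'; case: (leqP k k') => [|lt_k'k]; first exact: rank_leq.
by apply/negbTE; rewrite -ltnNge rank_lt.
Qed.

Lemma rank_inj k k' : S k -> S k' -> rank S k = rank S k' -> k = k'.
Proof.
move=> Sk Sk' eq_r; apply/eqP.
by rewrite eqn_leq -(leq_rank Sk Sk') -(leq_rank Sk' Sk) eq_r leqnn.
Qed.

Hypothesis S_unbounded : unbounded S.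

Lemma rank_surj r : exists k, S k && (rank S k == r).
Proof.
have ex_above : exists m, r < rank S m.
  elim: r => [|r [m lt_rm]].
    by have [k _ Sk] := S_unbounded 0; exists k.+1; rewrite rankS Sk addn1.
  have [k le_mk Sk] := S_unbounded m; exists k.+1.
  by rewrite rankS Sk addn1 ltnS (leq_trans lt_rm) ?rank_leq.
case: (ex_minnP ex_above) => [[|m]]; first by rewrite /rank.
move=> lt_r_rankSm min_m; exists m.
have : ~~ (r < rank S m) by apply/negP => /min_m; rewrite ltnn.
by move: lt_r_rankSm; rewrite rankS; case: (S m) => /=; lia.
Qed.

(* The r-th element of S, counting from 0. *)
Definition sel r := ex_minn (rank_surj r).

Lemma sel_in r : S (sel r).
Proof. by rewrite /sel; case: ex_minnP => m /andP[]. Qed.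

Lemma rank_sel r : rank S (sel r) = r.
Proof. by rewrite /sel; case: ex_minnP => m /andP[_ /eqP]. Qed.

Lemma sel_rank k : S k -> sel (rank S k) = k.
Proof. by move=> Sk; apply: rank_inj; rewrite ?sel_in ?rank_sel. Qed.

End Rank.

Lemma unbounded_leq_inj (h : nat -> nat) M :
  injective h -> unbounded (fun k => M <= h k).
Proof.
move=> inj_h N.
suff : has (fun k => M <= h k) (iota N M.+1).
  by case/hasP=> k; rewrite mem_iota => /andP[le_Nk _] hk; exists k.
apply/negPn/negP => /hasPn small.
have : size (map h (iota N M.+1)) <= size (iota 0 M).
  apply: uniq_leq_size; first by rewrite map_inj_uniq ?iota_uniq.
  by move=> y /mapP[k /small lt_hk ->]; rewrite mem_iota add0n ltnNge lt_hk.
by rewrite size_map !size_iota ltnn.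
Qed.

Lemma sig_inj T (Q : T -> Prop) (u v : {x | Q x}) : proj1_sig u = proj1_sig v -> u = v.
Proof. by case: u v => x qx [y qy] /= eq_xy; apply: subset_eq_compat. Qed.

Lemma linear_order_induced T (Y : T -> Prop) R :
  linear_order R -> linear_order (induced Y R).
Proof.
case=> refl anti trans total; split; rewrite /induced.
- by move=> x; apply: refl.
- by move=> x y Rxy Ryx; apply/sig_inj/anti.
- by move=> x y z; apply: trans.
- by move=> x y; apply: total.
Qed.

Lemma order_iso_trans T U V (R : T -> T -> Prop) (Q : U -> U -> Prop)
    (O : V -> V -> Prop) :
  order_iso R Q -> order_iso Q O -> order_iso R O.
Proof.
move=> [f [bij_f iso_f]] [g [bij_g iso_g]]; exists (g \o f).
by split=> [|x y]; [exact: bij_comp | rewrite iso_f iso_g].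
Qed.

Lemma order_iso_induced T U (R : T -> T -> Prop) (Q : U -> U -> Prop)
    (Y : T -> Prop) (Z : U -> Prop) (e : T -> U) (d : U -> T) :
    (forall x, Y x -> Z (e x)) -> (forall u, Z u -> Y (d u)) ->
    (forall x, Y x -> d (e x) = x) -> (forall u, Z u -> e (d u) = u) ->
    (forall x y, Y x -> Y y -> R x y <-> Q (e x) (e y)) ->
  order_iso (induced Y R) (induced Z Q).
Proof.
move=> YZ ZY deK edK iso_e.
exists (fun x => exist Z (e (proj1_sig x)) (YZ _ (proj2_sig x))); split.
  exists (fun u => exist Y (d (proj1_sig u)) (ZY _ (proj2_sig u))).
    by move=> [x Yx]; apply: sig_inj; rewrite /= deK.
  by move=> [u Zu]; apply: sig_inj; rewrite /= edK.
by move=> [x Yx] [y Yy]; exact: iso_e.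
Qed.

Lemma omega_unbounded (S : pred nat) :
  unbounded S -> order_iso (induced (fun k => S k) omega_le) omega_le.
Proof.
move=> S_unb; exists (fun k => rank S (proj1_sig k)); split.
  exists (fun r => exist (fun k => S k) (sel S_unb r) (sel_in S_unb r)).
    by move=> [k Sk]; apply: sig_inj; rewrite /= sel_rank.
  by move=> r; rewrite /= rank_sel.
by move=> [k Sk] [k' Sk']; rewrite /induced /omega_le /= leq_rank.
Qed.

Lemma omega_times_unbounded B (RB : B -> B -> Prop) (S : B -> pred nat) :
    (forall b, unbounded (S b)) ->
  order_iso (induced (fun p => S p.1 p.2) (omega_times RB)) (omega_times RB).
Proof.
move=> S_unb; pose Y (p : B * nat) := S p.1 p.2.
exists (fun p => ((proj1_sig p).1, rank (S (proj1_sig p).1) (proj1_sig p).2)).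
split.
  exists (fun p => exist Y (p.1, sel (S_unb p.1) p.2) (sel_in (S_unb p.1) p.2)).
    by move=> [[b k] Sbk]; apply: sig_inj; rewrite /= sel_rank.
  by move=> [b r]; rewrite /= rank_sel.
move=> [[b k] Sbk] [[b' k'] Sbk']; rewrite /induced /omega_times /=.
split=> [[lt_bb'|[eq_bb' le_kk']]|[lt_bb'|[eq_bb' le_rank]]]; [left|right|left|right] => //.
  by move: Sbk'; rewrite -eq_bb' => Sbk'; rewrite leq_rank.
by move: Sbk' le_rank; rewrite -eq_bb' => Sbk'; rewrite leq_rank.
Qed.

Lemma omega_times_plus_head B (RB : B -> B -> Prop) n T (R : T -> T -> Prop)
    (F : T -> B * nat + 'I_n) (G : B * nat + 'I_n -> T) (Y : pred T) :
    cancel F G -> cancel G F ->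
    (forall x y, R x y <-> omega_times_plus RB n (F x) (F y)) ->
    (forall x, Y x -> exists p, F x = inl p) -> (exists x, Y x) ->
    (forall b, unbounded (fun k => Y (G (inl (b, k))))) ->
  order_iso (induced (fun x => Y x) R) (omega_times RB).
Proof.
move=> FK GK iso_F Y_head [x0 /Y_head[p0 _]] Y_unb.
apply: (order_iso_trans _ (omega_times_unbounded RB Y_unb)).
apply: (order_iso_induced (e := fun x => if F x is inl p then p else p0)
                          (d := fun p => G (inl p))).
- by move=> x Yx; have [[b k] Fx] := Y_head x Yx; rewrite Fx /= -Fx FK.
- by move=> [b k].
- by move=> x /Y_head[p Fx]; rewrite Fx -Fx FK.
- by move=> [b k] _; rewrite GK.
- by move=> x y /Y_head[p Fx] /Y_head[q Fy]; rewrite iso_F Fx Fy.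
Qed.

Definition is_inr A B (s : A + B) : Prop := if s is inr _ then True else False.

Definition get_inr A B (s : A + B) : is_inr s -> B :=
  match s return is_inr s -> B with inl _ => False_rect B | inr b => fun _ => b end.

Lemma get_inrK A B (s : A + B) (p : is_inr s) : inr (get_inr p) = s.
Proof. by case: s p. Qed.

Lemma inr_fibre_bijective T A B (F : T -> A + B) (G : A + B -> T) :
  cancel F G -> cancel G F -> exists h : {x | is_inr (F x)} -> B, bijective h.
Proof.
move=> FK GK; exists (fun x : {x | is_inr (F x)} => get_inr (proj2_sig x)).
have is_inr_G b : is_inr (F (G (inr b))) by rewrite GK.
exists (fun b => exist _ (G (inr b)) (is_inr_G b)).
  by move=> [x inr_x]; apply: sig_inj; rewrite /= get_inrK FK.
by move=> b /=; move: (is_inr_G b); rewrite GK.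
Qed.

Theorem lemma2p7
  (A : Type) (RA : A -> A -> Prop)
  (HA : linear_order RA)
  (Acount : exists f : A -> nat, injective f)
  (Ainf : exists g : nat -> A, injective g)
  (B : Type) (RB : B -> B -> Prop) (HB : linear_order RB) (n : nat)
  (Hdec : order_iso RA (omega_times_plus RB n))
  (X : Type) (P : X -> X -> Prop)
  (HS : sierpinskisation P RA) :
  exists Y1 Y2 : X -> Prop,
    [/\ (forall x, Y1 x -> Y2 x -> False),
        (forall x y, Y1 x -> Y2 y -> ~ P x y /\ ~ P y x),
        sierpinskisation (induced Y1 P) (omega_times RB)
      & exists h : {x : X | Y2 x} -> 'I_n, bijective h].
Proof.
case: HS => L1 [L2 [lin1 lin2 iso1 [p2 [[g2 p2K g2K] iso_p2]] HP]].
have [F [[G FK GK] iso_F]] := order_iso_trans iso1 Hdec.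
pose M := (\max_(i < n) p2 (G (inr i))).+1.
pose Y1 x := M <= p2 x.
have tail_low x : is_inr (F x) -> p2 x < M.
  by case E: (F x) => [//|i] _; rewrite -(FK x) E ltnS (leq_bigmax i).
have head_high x : Y1 x -> exists p, F x = inl p.
  case E: (F x) => [p|i] Y1x; first by exists p.
  by have := tail_low x; rewrite E ltnNge => /(_ I)/negP.
exists Y1, (fun x => is_inr (F x)); split.
- by move=> x Y1x /tail_low; rewrite ltnNge => /negP.
- move=> x y Y1x inr_y; have [p Fx] := head_high x Y1x.
  split=> /HP[L1xy L2xy].
    by move/iso_p2: L2xy; move: Y1x (tail_low y inr_y); rewrite /Y1 /omega_le; lia.
  by move/iso_F: L1xy; rewrite Fx; case: (F y) inr_y.
- exists (induced Y1 L1), (induced Y1 L2); split; try exact: linear_order_induced.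
  + apply: (omega_times_plus_head FK GK iso_F head_high).
      by exists (g2 M); rewrite /Y1 g2K.
    by move=> b; apply: unbounded_leq_inj => k k' /(can_inj p2K)/(can_inj GK) [].
  + apply: (order_iso_trans _ (omega_unbounded (S := fun k => M <= k) _)); last first.
      exact: (unbounded_leq_inj (h := id)).
    by apply: (order_iso_induced (e := p2) (d := g2)) => // u; rewrite /Y1 g2K.
  + by move=> x y; exact: HP.
- exact: inr_fibre_bijective FK GK.
Qed.
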